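(* Let $M$ be a minimal dominating set of a finite tree $T$. Then $$|N_1(M)|-\rho_1(M)+|N_2(M)|-\rho_2(M)\le 2(\Gamma(T)-|M|).$$
   Context: A dominating set of a graph $G=(V,E)$ is a set $S\subseteq V$ such that every vertex is in $S$ or adjacent to a vertex of $S$; it is minimal if no proper subset is dominating. $\Gamma(T)$ is the maximum size of a minimal dominating set of $T$. $N[u]=N(u)\cup\{u\}$. For a dominating set $S$: $a(S)=\{u\in S: S\setminus\{u\}\text{ is not dominating}\}$; $N_1(S)=\{u\in V\setminus S: |N[u]\cap S|=1\}$; $N_2(S)=\{u\in V\setminus S: |N[u]\cap S|\ge 2\}$; $a_1(S)=\{u\in a(S): N[u]\cap N_1(S)\ne\emptyset\}$; $a_2(S)=\{u\in a(S): N[u]\cap N_1(S)=\emptyset\}$. $\rho_1(M)$ is the maximum size of a matching, using edges of $T$, between $N_1(M)$ and $a_1(M)$ (each edge joining a vertex of $N_1(M)$ to a vertex of $a_1(M)$); $\rho_2(M)$ is the maximum size of such a matching between $N_2(M)$ and $a_2(M)$. *)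

(* A finite simple graph is a symmetric irreflexive
   relation e on a finType T. *)
From mathcomp Require Import all_boot all_order all_algebra.
Set Implicit Arguments. Unset Strict Implicit. Unset Printing Implicit Defensive.

Section Domination.
Variables (T : finType) (e : rel T).

Definition is_cycle (c : seq T) : bool := [&& 2 < size c, uniq c & cycle e c].
Definition acyclic : Prop := forall c : seq T, ~~ is_cycle c.
Definition connected : Prop := forall x y : T, connect e x y.
Definition is_tree : Prop := [/\ symmetric e, irreflexive e, connected & acyclic].

Definition cnbhd (u : T) : {set T} := [set v | e u v] :|: [set u].

Definition dominating (S : {set T}) : bool :=
  [forall v, cnbhd v :&: S != set0].

Definition minimal_dominating (S : {set T}) : bool :=
  dominating S && [forall S' : {set T}, (S' \proper S) ==> ~~ dominating S'].

Definition upper_domination : nat :=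
  \max_(S : {set T} | minimal_dominating S) #|S|.

Definition a_set (S : {set T}) : {set T} := [set u in S | ~~ dominating (S :\ u)].
Definition N1 (S : {set T}) : {set T} := [set u in ~: S | #|cnbhd u :&: S| == 1].
Definition N2 (S : {set T}) : {set T} := [set u in ~: S | 2 <= #|cnbhd u :&: S|].
Definition a1 (S : {set T}) : {set T} :=
  [set u in a_set S | cnbhd u :&: N1 S != set0].
Definition a2 (S : {set T}) : {set T} :=
  [set u in a_set S | cnbhd u :&: N1 S == set0].

Definition matching_between (A B : {set T}) (Mt : {set T * T}) : bool :=
  [forall p in Mt, [&& p.1 \in A, p.2 \in B & e p.1 p.2]] &&
  [forall p in Mt, forall q in Mt,
     (p != q) ==> ((p.1 != q.1) && (p.2 != q.2))].

Definition max_matching (A B : {set T}) : nat :=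
  \max_(Mt : {set T * T} | matching_between A B Mt) #|Mt|.

Definition rho1 (S : {set T}) : nat := max_matching (N1 S) (a1 S).
Definition rho2 (S : {set T}) : nat := max_matching (N2 S) (a2 S).

End Domination.

(* A minimal dominating set M splits as a1 ⊔ a2, every vertex of a1 has a
   private neighbour in N1 (giving a matching of size |a1| into N1), and every
   neighbour of a vertex of a2 lies in N2, so any matching of the tree restricted
   to a2 is a matching between a2 and N2.  Hence the left-hand side is at most
   n - |M| - |a1| - |a2 ∩ C| for any matched set C.  Peeling leaves, a forest on
   n vertices has an independent set I and a matched set C with 2n <= 2|I| + |C|;
   extending I to a maximal independent set gives a minimal dominating set, so
   |I| <= Γ, and counting finishes the proof. *)

From mathcomp Require Import all_boot all_order all_algebra.
From mathcomp Require Import zify.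
Set Implicit Arguments. Unset Strict Implicit. Unset Printing Implicit Defensive.

Section Domination.
Variables (T : finType) (e : rel T).
Hypotheses (esym : symmetric e) (eirr : irreflexive e) (eacyc : acyclic e).

Lemma acyclic_path_end_nbr x p y :
  uniq (x :: p) -> path e x p -> y \in x :: p -> e (last x p) y ->
  y = last x (belast x p).
Proof.
move=> Hu Hp yin.
have [s [t Exp]] : exists s t, x :: p = s ++ y :: t.
  by case/splitPr: yin => s t; exists s, t.
have -> : last x p = last y t by rewrite -[last x p]/(last x (x :: p)) Exp last_cat.
case: t Exp => [|w [|w' t]] Exp.
- by rewrite /= eirr.
- move=> _; move: Exp; rewrite lastI -cat_rcons cats1 => /rcons_inj [-> _].
  by rewrite last_rcons.
- move=> Hend; have /negP [] := eacyc [:: y, w, w' & t].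
  have Hs : sorted e (s ++ [:: y, w, w' & t]) by rewrite -Exp.
  apply/and3P; split=> //.
  - by move: Hu; rewrite Exp cat_uniq => /and3P [].
  - by rewrite /= rcons_path Hend andbT; case: (cat_sorted2 Hs).
Qed.

Lemma acyclic_path_extend (S : {set T}) x p :
  uniq (x :: p) -> path e x p -> 1 < #|[set y in S | e (last x p) y]| ->
  exists2 y, y \in S & e (last x p) y && (y \notin x :: p).
Proof.
move=> Hu Hp /card_gt1P [y1 [y2 [+ + y12]]].
rewrite !inE => /andP [y1S e1] /andP [y2S e2].
case: (boolP (y1 \in x :: p)) => y1p; last by exists y1; rewrite ?e1.
case: (boolP (y2 \in x :: p)) => y2p; last by exists y2; rewrite ?e2.
move: y12; rewrite (acyclic_path_end_nbr Hu Hp y1p e1).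
by rewrite (acyclic_path_end_nbr Hu Hp y2p e2) eqxx.
Qed.

Lemma acyclic_low_degree (S : {set T}) :
  S != set0 -> exists2 x, x \in S & #|[set y in S | e x y]| <= 1.
Proof.
case/set0Pn=> x0 x0S.
have [/exists_inP //|] := boolP [exists x in S, #|[set y in S | e x y]| <= 1].
rewrite negb_exists_in => /forall_inP Hdeg; exfalso.
have long k : exists s, [/\ size s = k.+1, uniq s, sorted e s & {subset s <= S}].
  elim: k => [|k [s [Hsz Hu Hp HS]]].
    by exists [:: x0]; split=> // y; rewrite inE => /eqP ->.
  case: s Hsz Hu Hp HS => [//|x p] Hsz Hu Hp HS.
  have deg_end : 1 < #|[set y in S | e (last x p) y]|.
    by rewrite ltnNge Hdeg // HS // mem_last.
  have [y yS /andP [ey yn]] := acyclic_path_extend Hu Hp deg_end.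
  exists (rcons (x :: p) y); split.
  - by rewrite size_rcons Hsz.
  - by rewrite rcons_uniq yn Hu.
  - by rewrite /= rcons_path ey andbT.
  - by move=> z; rewrite mem_rcons inE => /predU1P [-> //|/HS].
have [s [Hsz Hu _ _]] := long #|T|.
by have := max_card (mem s); rewrite (card_uniqP Hu) Hsz ltnn.
Qed.

Definition independent (I : {set T}) : bool := [forall x in I, forall y in I, ~~ e x y].

Lemma independentP (I : {set T}) : reflect {in I &, forall x y, ~~ e x y} (independent I).
Proof.
apply: (iffP forall_inP) => [H x y /H /forall_inP|H x xI]; first exact.
by apply/forall_inP => y; apply: H.
Qed.

(* A perfect matching of [C], encoded by the involution sending each vertex to
   its partner. *)
Definition matching_on (f : T -> T) (C : {set T}) : Prop :=
  {in C, forall x, [/\ f x \in C, f (f x) = x & e x (f x)]}.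

Definition indep_matching_cover (S : {set T}) : Prop :=
  exists (I C : {set T}) (f : T -> T),
    [/\ I \subset S, C \subset S, independent I, matching_on f C
       & 2 * #|S| <= 2 * #|I| + #|C|].

Lemma indep_matching_cover_isolated (S : {set T}) x :
  x \in S -> (forall y, y \in S -> ~~ e x y) ->
  indep_matching_cover (S :\ x) -> indep_matching_cover S.
Proof.
move=> xS xiso [I [C [f [IS CS indI fC Hcard]]]].
have xI : x \notin I by apply/negP => /(subsetP IS); rewrite !inE eqxx.
have IS' : I \subset S := subset_trans IS (subD1set S x).
exists (x |: I), C, f; split=> //.
- by rewrite subUset sub1set xS IS'.
- exact: subset_trans CS (subD1set S x).
- apply/independentP => a b; rewrite !inE => /predU1P [->|aI] /predU1P [->|bI].
  + by rewrite eirr.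
  + exact/xiso/(subsetP IS').
  + by rewrite esym; apply/xiso/(subsetP IS').
  + exact: (independentP _ indI).
- by move: Hcard; rewrite cardsU1 xI (cardsD1 x S) xS; lia.
Qed.

Lemma indep_matching_cover_leaf (S : {set T}) x p :
  x \in S -> p \in S -> e x p -> (forall y, y \in S -> e x y -> y = p) ->
  indep_matching_cover (S :\ x :\ p) -> indep_matching_cover S.
Proof.
move=> xS pS exp xleaf [I [C [f [IS CS indI fC Hcard]]]].
have px : p != x by apply: contraTneq exp => ->; rewrite eirr.
have inS' (A : {set T}) y :
    A \subset S :\ x :\ p -> y \in A -> [/\ y != p, y != x & y \in S].
  by move=> /subsetP AS /AS; rewrite !inE => /and3P [].
have xI : x \notin I by apply/negP => /(inS' _ _ IS) []; rewrite eqxx.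
have xC : x \notin C by apply/negP => /(inS' _ _ CS) []; rewrite eqxx.
have pC : p \notin C by apply/negP => /(inS' _ _ CS) []; rewrite eqxx.
pose g y := if y == x then p else if y == p then x else f y.
exists (x |: I), (x |: (p |: C)), g; split.
- by apply/subsetP => y; rewrite !inE => /predU1P [-> //|/(inS' _ _ IS) []].
- by apply/subsetP => y; rewrite !inE => /or3P [/eqP -> //|/eqP -> //|/(inS' _ _ CS) []].
- apply/independentP => a b; rewrite !inE => /predU1P [->|aI] /predU1P [->|bI].
  + by rewrite eirr.
  + case/(inS' _ _ IS): bI => bp _ bS; apply: contra bp => exb.
    by rewrite (xleaf b bS exb).
  + case/(inS' _ _ IS): aI => ap _ aS; apply: contra ap; rewrite esym => exa.
    by rewrite (xleaf a aS exa).
  + exact: (independentP _ indI).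
- move=> y; rewrite !inE => /or3P [/eqP ->|/eqP ->|yC].
  + by rewrite /g eqxx (negbTE px) eqxx orbT.
  + by rewrite /g (negbTE px) !eqxx esym.
  + have [yp yx _] := inS' _ _ CS yC.
    have [fyC ffy eyf] := fC y yC.
    have [fyp fyx _] := inS' _ _ CS fyC.
    by rewrite /g (negbTE yp) (negbTE yx) (negbTE fyp) (negbTE fyx) ffy fyC !orbT.
- move: Hcard; rewrite (cardsD1 x S) xS (cardsD1 p (S :\ x)) !inE px pS.
  rewrite cardsU1 xI cardsU1 !inE negb_or eq_sym px xC cardsU1 pC /=; lia.
Qed.

Lemma acyclic_indep_matching_cover (S : {set T}) : indep_matching_cover S.
Proof.
elim: {S}_.+1 {-2}S (ltnSn #|S|) => // n IH S HS.
have [->|S0] := eqVneq S set0.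
  exists set0, set0, id; split; rewrite ?sub0set ?cards0 //.
  - by apply/independentP => x; rewrite inE.
  - by move=> x; rewrite inE.
have [x xS deg_x] := acyclic_low_degree S0.
have HSx : #|S :\ x| < n by move: HS; rewrite (cardsD1 x S) xS.
case: (posnP #|[set y in S | e x y]|) => [/cards0_eq deg0|deg1].
  apply: indep_matching_cover_isolated xS _ (IH _ HSx) => y yS.
  by apply/negP => exy; have := in_set0 y; rewrite -deg0 inE yS exy.
have /cards1P [p Np] : #|[set y in S | e x y]| == 1 by rewrite eqn_leq deg_x.
have /setIdP [pS exp] : p \in [set y in S | e x y] by rewrite Np set11.
apply: (indep_matching_cover_leaf xS pS exp).
  by move=> y yS exy; apply/set1P; rewrite -Np inE yS exy.
apply: IH; apply: leq_ltn_trans HSx; exact: subset_leq_card (subD1set _ p).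
Qed.

Lemma in_cnbhd u v : (v \in cnbhd e u) = e u v || (v == u).
Proof. by rewrite !inE. Qed.

Lemma independent_minimal_dominating (J : {set T}) :
  independent J -> dominating e J -> minimal_dominating e J.
Proof.
move=> /independentP indJ domJ; rewrite /minimal_dominating domJ /=.
apply/forallP => S'; apply/implyP => /properP [S'J [u uJ uS']].
apply/forallPn; exists u; rewrite negbK; apply/eqP/setP => w; rewrite !inE.
apply/negP => /andP [/orP [euw|/eqP ->] wS']; last by rewrite wS' in uS'.
by have := indJ u w uJ (subsetP S'J w wS'); rewrite euw.
Qed.

Lemma maxset_independent_dominating (J : {set T}) :
  maxset independent J -> dominating e J.
Proof.
move=> /maxsetP [/independentP indJ maxJ]; apply/forallP => v; apply/set0Pn.
have [vJ0|[w wvJ]] := set_0Vmem (cnbhd e v :&: J); last by exists w.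
have vJ' w : w \in J -> ~~ e v w.
  by move=> wJ; apply/negP => evw; have := in_set0 w; rewrite -vJ0 !inE evw wJ.
have indvJ : independent (v |: J).
  apply/independentP => a b; rewrite !inE => /predU1P [->|aJ] /predU1P [->|bJ].
  - by rewrite eirr.
  - exact: vJ'.
  - by rewrite esym vJ'.
  - exact: indJ.
have vJ : v \in J by rewrite -(maxJ _ indvJ (subsetUr _ _)) setU11.
by exists v; rewrite !inE eqxx orbT.
Qed.

Lemma independent_le_upper_domination (I : {set T}) :
  independent I -> #|I| <= upper_domination e.
Proof.
move=> indI; have [J maxJ IJ] := maxset_exists indI.
have minJ : minimal_dominating e J.
  apply: independent_minimal_dominating (maxset_independent_dominating maxJ).
  by case/maxsetP: maxJ.
exact: leq_trans (subset_leq_card IJ) (leq_bigmax_cond _ minJ).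
Qed.

Lemma max_matching_ge_inj (X Y A : {set T}) (g : T -> T) :
  A \subset Y -> {in A &, injective g} -> {in A, forall u, g u \in X /\ e (g u) u} ->
  #|A| <= max_matching e X Y.
Proof.
move=> AY ginj Hg; pose Mt := [set (g u, u) | u in A].
have <- : #|Mt| = #|A| by apply: card_imset => u v [].
apply: leq_bigmax_cond; apply/andP; split.
  apply/forall_inP => _ /imsetP [u uA ->] /=; have [gX egu] := Hg u uA.
  by rewrite gX (subsetP AY).
apply/forall_inP => _ /imsetP [u uA ->]; apply/forall_inP => _ /imsetP [v vA ->] /=.
by apply/implyP; case: (eqVneq u v) => [->|uv _]; rewrite ?eqxx // (inj_in_eq ginj) ?uv.
Qed.

Lemma a_set_private (S : {set T}) u :
  dominating e S -> u \in a_set e S -> exists v, cnbhd e v :&: S = [set u].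
Proof.
move=> /forallP domS; rewrite inE => /andP [uS /forallPn [v]].
rewrite negbK => /eqP vSu.
have : cnbhd e v :&: S \subset [set u].
  apply/subsetP => z zvS; rewrite inE; apply/negPn/negP => zu.
  by case/setIP: zvS => zv zS; have := in_set0 z; rewrite -vSu inE zv in_setD1 zu zS.
by rewrite subset1 (negbTE (domS v)) orbF => /eqP; exists v.
Qed.

Lemma a2_nbr_notin (S : {set T}) u w :
  dominating e S -> u \in a2 e S -> e u w -> w \notin S.
Proof.
move=> domS ua2; have /setIdP [ua /eqP uN1] := ua2.
have [v vS] := a_set_private domS ua.
have onlyu y : y \in cnbhd e v -> y \in S -> y = u.
  by move=> yv yS; apply/set1P; rewrite -vS inE yv.
have [vu|vu] := eqVneq v u.
  move: onlyu; rewrite vu => onlyu euw; apply/negP => wS.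
  have wu : w = u by apply: onlyu wS; rewrite in_cnbhd euw.
  by move: euw; rewrite wu eirr.
have uvS : u \in cnbhd e v :&: S by rewrite vS set11.
have vS' : v \notin S by apply: contra vu => /(onlyu v); rewrite in_cnbhd eqxx orbT => ->.
have vN1 : v \in N1 e S by rewrite !inE vS' vS cards1.
have : v \in cnbhd e u :&: N1 e S.
  case/setIP: uvS; rewrite in_cnbhd eq_sym (negbTE vu) orbF => evu _.
  by rewrite inE vN1 andbT in_cnbhd esym evu.
by rewrite uN1 inE.
Qed.

Lemma a2_nbr_N2 (S : {set T}) u w :
  dominating e S -> u \in a2 e S -> e u w -> w \in N2 e S.
Proof.
move=> domS ua2 euw; have wS := a2_nbr_notin domS ua2 euw.
have /setIdP [/setIdP [uS _] /eqP uN1] := ua2.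
have wN1 : w \notin N1 e S.
  by apply/negP => wN1; have := in_set0 w; rewrite -uN1 inE wN1 in_cnbhd euw.
have : 0 < #|cnbhd e w :&: S|.
  by apply/card_gt0P; exists u; rewrite inE in_cnbhd esym euw uS.
by move: wN1; rewrite !inE wS /=; lia.
Qed.

Lemma minimal_dominating_a_set (S : {set T}) : minimal_dominating e S -> a_set e S = S.
Proof.
case/andP=> _ /forallP minS; apply/setP => u; rewrite inE andb_idr // => uS.
exact: implyP (minS _) (properD1 uS).
Qed.

Lemma card_a_set (S : {set T}) : #|a_set e S| = #|a1 e S| + #|a2 e S|.
Proof.
rewrite -(cardsID [set u | cnbhd e u :&: N1 e S != set0] (a_set e S)).
by congr (_ + _); apply: eq_card => u; rewrite !inE // negbK andbC.
Qed.

Lemma card_N1_N2 (S : {set T}) : #|S| + #|N1 e S| + #|N2 e S| <= #|T|.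
Proof.
have N12 : N1 e S :&: N2 e S = set0.
  by apply/setP => u; rewrite !inE; case: (_ \notin S) => //=; case: eqP => // ->.
have : N1 e S :|: N2 e S \subset ~: S.
  by rewrite subUset; apply/andP; split; apply/subsetP => u; rewrite !inE => /andP [].
move=> /subset_leq_card; have := cardsUI (N1 e S) (N2 e S); have := cardsC S.
rewrite N12 cards0; lia.
Qed.

Lemma a1_le_rho1 (S : {set T}) : #|a1 e S| <= rho1 e S.
Proof.
pose g u := odflt u [pick v in cnbhd e u :&: N1 e S].
have gN1 u : u \in a1 e S -> g u \in cnbhd e u :&: N1 e S.
  rewrite inE => /andP [_ /set0Pn [v vin]].
  by rewrite /g; case: pickP => [//|/(_ v)]; rewrite vin.
have a1S u : u \in a1 e S -> u \in S by rewrite !inE => /andP [/andP []].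
have ega u : u \in a1 e S -> e (g u) u.
  move=> ua1; case/setIP: (gN1 u ua1); rewrite in_cnbhd esym.
  by case/orP=> // /eqP ->; rewrite !inE a1S.
apply: max_matching_ge_inj (subxx _) _ _; last first.
  by move=> u ua1; case/setIP: (gN1 u ua1) => _ guN1; split; last exact: ega.
move=> u v ua1 va1 guv.
case/setIP: (gN1 u ua1) => _; rewrite inE => /andP [_ /cards1P [z Hz]].
have : u \in cnbhd e (g u) :&: S by rewrite inE in_cnbhd ega ?a1S.
have : v \in cnbhd e (g u) :&: S by rewrite inE in_cnbhd guv ega ?a1S.
by rewrite Hz !inE => /eqP -> /eqP ->.
Qed.

Lemma matching_a2_le_rho2 (S C : {set T}) (f : T -> T) :
  dominating e S -> matching_on f C -> #|a2 e S :&: C| <= rho2 e S.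
Proof.
move=> domS fC; apply: (max_matching_ge_inj (g := f)) (subsetIl _ _) _ _.
  move=> u v /setIP [_ uC] /setIP [_ vC] fuv.
  by have [_ <- _] := fC u uC; have [_ <- _] := fC v vC; rewrite fuv.
move=> u /setIP [ua2 uC]; have [_ _ euf] := fC u uC.
by rewrite esym euf (a2_nbr_N2 domS ua2 euf).
Qed.

End Domination.

Unset Implicit Arguments.
Local Open Scope ring_scope.

Theorem theorem4p8 (T : finType) (e : rel T) (M : {set T}) :
  is_tree e -> minimal_dominating e M ->
  (#|N1 e M|%:Z - (rho1 e M)%:Z + #|N2 e M|%:Z - (rho2 e M)%:Z
     <= 2 * ((upper_domination e)%:Z - #|M|%:Z))%R.
Proof.
case=> esym eirr _ eacyc minM; have domM : dominating e M by case/andP: minM.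
have [I [C [f [_ _ indI fC]]]] := acyclic_indep_matching_cover esym eirr eacyc [set: T].
rewrite cardsT => cover.
have := independent_le_upper_domination esym eirr indI.
have := a1_le_rho1 esym M.
have := matching_a2_le_rho2 esym eirr domM fC.
have := card_a_set e M; rewrite minimal_dominating_a_set //.
have := card_N1_N2 e M.
have := cardsUI (a2 e M) C; have := cardsC (a2 e M :|: C).
lia.
Qed.
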